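(* Let $K\le L$ be positive integers with $2^K>N$, and consider a nonempty configuration. If $A(G)\ge 2^K$, then the expected number of times a full execution of the inter-level sampler enters the refinement loop is at most $N/(2^K-N)$. If $A(G)\ge 2^L$, this bound improves to $N/(2^L-N)$.
   Context: Fix an integer $b\ge 2$. There is a set $\mathcal L$ of $N$ levels, which are consecutive integers. Each level $\ell$ holds a finite (possibly empty) multiset of normalized significands, each an integer in $[2^{b-1},2^b)$. Let $z$ be the total number of stored significands over all levels; assume $z<2^b$. For each level, $SS_\ell$ is the sum of its significands (so $SS_\ell=0$ iff the level is empty); set $SS_\ell=0$ for integers $\ell\notin\mathcal L$. The level weight is $W_\ell=SS_\ell2^\ell$. For an integer global shift $G$, $A_\ell(G)=\lfloor W_\ell2^G\rfloor+1$ if $SS_\ell>0$ and $A_\ell(G)=0$ if $SS_\ell=0$; $A(G)=\sum_\ell A_\ell(G)$ and $M(G)=\sum_\ell W_\ell2^G$. The configuration is nonempty if $z\ge1$. Inter-level sampler (Algorithm 1), with shift $G$ and $A=A(G)$: it performs independent outer iterations. In an outer iteration, draw $x$ uniformly from $\{1,\dots,A\}$ and scan the levels in decreasing order starting from the largest nonempty level. At the current level $\ell$: if $x<A_\ell(G)$, return $\ell$; if $x=A_\ell(G)$, run the refinement loop for $m=1,2,\dots$: draw $r$ uniformly from $\{0,\dots,2^b-1\}$ independently, let $t=\lfloor SS_\ell 2^{\ell+G+mb}\rfloor \bmod 2^b$; if $r<t$ return $\ell$; else if $r>t$ or $\ell+G+mb\ge 0$, abandon this outer iteration and start a new one; otherwise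 continue with $m+1$. If $x>A_\ell(G)$, set $x\leftarrow x-A_\ell(G)$ and move to the next lower level. *)

From Stdlib Require Import Reals ZArith List Lia Lra.
From Coquelicot Require Import Coquelicot.
Import ListNotations.
Open Scope R_scope.

(* A configuration: base b, lowest level lo, N levels lo, lo+1, ..., lo+N-1;
   level with index i (i < N) is the integer level  lo + i  and holds the
   multiset (list) of significands  sig i. *)

Definition rsum (l : list R) : R := fold_right Rplus 0 l.

Definition SS (sig : nat -> list nat) (i : nat) : nat := fold_right Nat.add 0%nat (sig i).

Definition zcount (N : nat) (sig : nat -> list nat) : nat :=
  fold_right Nat.add 0%nat (map (fun i => length (sig i)) (seq 0 N)).

Definition level (lo : Z) (i : nat) : Z := (lo + Z.of_nat i)%Z.

Definition Wl (lo : Z) (sig : nat -> list nat) (i : nat) : R :=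
  INR (SS sig i) * powerRZ 2 (level lo i).

Definition Al (lo : Z) (sig : nat -> list nat) (G : Z) (i : nat) : Z :=
  if Nat.eqb (SS sig i) 0 then 0%Z
  else (Int_part (Wl lo sig i * powerRZ 2 G) + 1)%Z.

Definition Atot (lo : Z) (N : nat) (sig : nat -> list nat) (G : Z) : Z :=
  fold_right Z.add 0%Z (map (Al lo sig G) (seq 0 N)).

Definition tval (b : nat) (lo : Z) (sig : nat -> list nat) (G : Z) (i m : nat) : Z :=
  Z.modulo (Int_part (INR (SS sig i) *
              powerRZ 2 (level lo i + G + Z.of_nat m * Z.of_nat b)))
           (2 ^ Z.of_nat b).

(* Probability that the refinement loop at level index i, started at round m,
   returns the level (rather than abandoning the outer iteration).
   In round m, with r uniform in {0..2^b-1}: return iff r < t (prob t/2^b);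
   continue to round m+1 iff r = t (prob 1/2^b) and l+G+mb < 0;
   abandon otherwise.  [fuel] bounds the number of rounds; see refine_prob. *)
Fixpoint refine_succ (b : nat) (lo : Z) (sig : nat -> list nat) (G : Z)
    (i : nat) (fuel m : nat) : R :=
  match fuel with
  | O => 0
  | S f =>
      IZR (tval b lo sig G i m) / 2 ^ b
      + (if Z.ltb (level lo i + G + Z.of_nat m * Z.of_nat b) 0
         then / 2 ^ b * refine_succ b lo sig G i f (S m)
         else 0)
  end.

(* The loop starts at m = 1 and surely stops by round m = -(l+G)+1
   (since b >= 1, at that round l+G+mb >= 0), so this fuel is exact. *)
Definition refine_prob (b : nat) (lo : Z) (sig : nat -> list nat) (G : Z)
    (i : nat) : R :=
  refine_succ b lo sig G i (Z.to_nat (- (level lo i + G)) + 1) 1.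

Inductive scan_out := SRet (i : nat) | SRefine (i : nat) | SFall.

Fixpoint scan (lo : Z) (sig : nat -> list nat) (G : Z) (x : Z) (l : list nat)
    : scan_out :=
  match l with
  | [] => SFall
  | i :: l' =>
      let a := Al lo sig G i in
      if Z.ltb x a then SRet i
      else if Z.eqb x a then SRefine i
      else scan lo sig G (x - a) l'
  end.

(* Levels in decreasing order: indices N-1, ..., 0 (empty levels have A_l=0
   and are passed over without changing x, so starting at the top level is
   the same as starting at the largest nonempty level). *)
Definition levels_desc (N : nat) : list nat := rev (seq 0 N).

Definition draws (A : Z) : list Z := map (fun k => Z.of_nat k + 1)%Z (seq 0 (Z.to_nat A)).

Definition scan_x (lo : Z) (N : nat) (sig : nat -> list nat) (G : Z) (x : Z) :=
  scan lo sig G x (levels_desc N).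

Definition P_ret (b : nat) (lo : Z) (N : nat) (sig : nat -> list nat) (G : Z) : R :=
  rsum (map (fun x => match scan_x lo N sig G x with
                      | SRet _ => 1
                      | SRefine i => refine_prob b lo sig G i
                      | SFall => 0
                      end) (draws (Atot lo N sig G)))
  / IZR (Atot lo N sig G).

Definition P_enter (lo : Z) (N : nat) (sig : nat -> list nat) (G : Z) : R :=
  rsum (map (fun x => match scan_x lo N sig G x with
                      | SRefine _ => 1
                      | _ => 0
                      end) (draws (Atot lo N sig G)))
  / IZR (Atot lo N sig G).

(* Term k of the expected number of refinement-loop entries of a full run:
   P(outer iteration k+1 is executed, i.e. the first k iterations were all
   abandoned) * P(that iteration enters the refinement loop); iterations are
   independent.  The expectation is the sum over k >= 0 (linearity). *)
Definition refine_entries_term (b : nat) (lo : Z) (N : nat) (sig : nat -> list nat)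
    (G : Z) (k : nat) : R :=
  (1 - P_ret b lo N sig G) ^ k * P_enter lo N sig G.

Definition expected_refine_entries (b : nat) (lo : Z) (N : nat)
    (sig : nat -> list nat) (G : Z) : R :=
  Series (refine_entries_term b lo N sig G).

(* Every draw x in {1, ..., A} that is not immediately accepted is the draw
   x = A_l at some nonempty level l (reached with the remaining value equal to
   A_l), so at most N of the A draws stall.  Hence one outer iteration enters
   the refinement loop with probability e <= N/A and returns with probability
   p >= 1 - N/A.  Iterations are independent, so the expected number of
   entries is the geometric sum  e / p <= N / (A - N) <= N / (2^M - N)
   whenever A >= 2^M > N. *)

From Stdlib Require Import Reals ZArith List Lia Lra.
From Coquelicot Require Import Coquelicot.
Import ListNotations.
Open Scope R_scope.

Lemma pow2_ge1 (n : nat) : 1 <= 2 ^ n.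
Proof. induction n; simpl; lra. Qed.

Lemma IZR_pow2 (n : nat) : IZR (2 ^ Z.of_nat n) = 2 ^ n.
Proof. rewrite <- pow_IZR. reflexivity. Qed.

Lemma tval_range b lo sig G i m :
  (0 <= tval b lo sig G i m < 2 ^ Z.of_nat b)%Z.
Proof. apply Z.mod_pos_bound, Z.pow_pos_nonneg; lia. Qed.

Lemma refine_succ_range b lo sig G i fuel m :
  0 <= refine_succ b lo sig G i fuel m <= 1.
Proof.
  revert m; induction fuel as [|fuel IH]; intro m; simpl; [lra|].
  set (t := IZR (tval b lo sig G i m)).
  pose proof (pow2_ge1 b) as Hb.
  assert (0 <= t /\ t + 1 <= 2 ^ b) as [Ht0 Ht1].
  { pose proof (tval_range b lo sig G i m) as Ht; unfold t; split.
    - apply IZR_le; lia.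
    - rewrite <- IZR_pow2, <- plus_IZR; apply IZR_le; lia. }
  (* the two outcomes r < t and r = t of the round have total mass (t + 1) / 2^b *)
  assert (Hmass : t / 2 ^ b + / 2 ^ b <= 1).
  { apply Rmult_le_reg_r with (2 ^ b); [lra|].
    field_simplify; lra. }
  assert (Hdiv : 0 <= t / 2 ^ b) by (apply Rdiv_le_0_compat; lra).
  assert (Hinv : 0 < / 2 ^ b) by (apply Rinv_0_lt_compat; lra).
  destruct (IH (S m)); destruct (Z.ltb _ _); split; nra.
Qed.

Lemma refine_prob_range b lo sig G i : 0 <= refine_prob b lo sig G i <= 1.
Proof. apply refine_succ_range. Qed.

Lemma Int_part_nonneg x : 0 <= x -> (0 <= Int_part x)%Z.
Proof.
  intro Hx. unfold Int_part. destruct (archimed x) as [Hup _].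
  assert (Hpos : (0 < up x)%Z) by (apply lt_IZR; lra).
  lia.
Qed.

Lemma Al_nonneg lo sig G i : (0 <= Al lo sig G i)%Z.
Proof.
  unfold Al. destruct (Nat.eqb _ _); [lia|].
  assert (Hw : 0 <= Wl lo sig i * powerRZ 2 G).
  { unfold Wl. pose proof (powerRZ_lt 2 (level lo i)); pose proof (powerRZ_lt 2 G).
    pose proof (pos_INR (SS sig i)). intros; apply Rmult_le_pos; [apply Rmult_le_pos|]; lra. }
  pose proof (Int_part_nonneg _ Hw). lia.
Qed.

Lemma sumZ_app (l1 l2 : list Z) :
  fold_right Z.add 0%Z (l1 ++ l2) = (fold_right Z.add 0 l1 + fold_right Z.add 0 l2)%Z.
Proof. induction l1; simpl; lia. Qed.

Lemma sumZ_rev (l : list Z) : fold_right Z.add 0%Z (rev l) = fold_right Z.add 0%Z l.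
Proof. induction l; simpl; [lia|]. rewrite sumZ_app, IHl. simpl. lia. Qed.

Lemma rsum_app l1 l2 : rsum (l1 ++ l2) = rsum l1 + rsum l2.
Proof. induction l1; simpl; lra. Qed.

Lemma rsum_le {T} (f1 f2 : T -> R) (l : list T) :
  (forall x, f1 x <= f2 x) -> rsum (map f1 l) <= rsum (map f2 l).
Proof. intro H. induction l as [|x l IH]; simpl; [lra|]. pose proof (H x). lra. Qed.

Lemma rsum_le_plus {T} (f g h : T -> R) (l : list T) :
  (forall x, f x <= g x + h x) -> rsum (map f l) <= rsum (map g l) + rsum (map h l).
Proof. intro H. induction l as [|x l IH]; simpl; [lra|]. pose proof (H x). lra. Qed.

Lemma rsum_map_const {T} (c : R) (l : list T) :
  rsum (map (fun _ => c) l) = INR (length l) * c.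
Proof.
  induction l as [|x l IH]; simpl; [lra|].
  rewrite IH. destruct (length l); simpl; lra.
Qed.

Lemma draws_succ (n : nat) :
  draws (Z.of_nat (S n)) = draws (Z.of_nat n) ++ [(Z.of_nat n + 1)%Z].
Proof. unfold draws. rewrite !Nat2Z.id, seq_S, map_app. reflexivity. Qed.

Lemma length_draws (n : nat) : length (draws (Z.of_nat n)) = n.
Proof. unfold draws. rewrite length_map, length_seq, Nat2Z.id. reflexivity. Qed.

Section StallCount.

Variables (lo : Z) (sig : nat -> list nat) (G : Z).

Definition returns (o : scan_out) : bool :=
  match o with SRet _ => true | _ => false end.

Definition level_mass (l : list nat) : Z := fold_right Z.add 0%Z (map (Al lo sig G) l).

Fixpoint stall_count (l : list nat) (n : nat) : nat :=
  match n with
  | O => 0%nat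
  | S n' =>
      (stall_count l n' + if returns (scan lo sig G (Z.of_nat n' + 1) l) then 0 else 1)%nat
  end.

Lemma stall_count_nil n : stall_count [] n = n.
Proof. induction n; simpl; lia. Qed.

Lemma stall_count_cons_empty i l n :
  Al lo sig G i = 0%Z -> stall_count (i :: l) n = stall_count l n.
Proof.
  intro Ha. induction n as [|n IH]; simpl; [reflexivity|].
  rewrite IH, Ha, Z.sub_0_r.
  destruct (Z.ltb_spec (Z.of_nat n + 1) 0); [lia|].
  destruct (Z.eqb_spec (Z.of_nat n + 1) 0); [lia|].
  reflexivity.
Qed.

(* Draws below A_i return at once, the draw A_i stalls, and the draws above
   are passed to the rest of the scan shifted down by A_i. *)
Lemma stall_count_cons i l n :
  (1 <= Al lo sig G i)%Z ->
  stall_count (i :: l) n =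
  (if (Z.of_nat n <? Al lo sig G i)%Z then 0
   else 1 + stall_count l (Z.to_nat (Z.of_nat n - Al lo sig G i)))%nat.
Proof.
  intro Ha. set (a := Al lo sig G i) in *.
  induction n as [|n IH]; cbn [stall_count].
  - destruct (Z.ltb_spec (Z.of_nat 0) a); [reflexivity|lia].
  - rewrite IH. cbn [scan]. fold a. rewrite Nat2Z.inj_succ.
    destruct (Z.ltb_spec (Z.of_nat n) a); destruct (Z.ltb_spec (Z.succ (Z.of_nat n)) a);
      destruct (Z.ltb_spec (Z.of_nat n + 1) a); try lia.
    + reflexivity.
    + destruct (Z.eqb_spec (Z.of_nat n + 1) a); [|lia].
      replace (Z.to_nat (Z.succ (Z.of_nat n) - a)) with 0%nat by lia. reflexivity.
    + destruct (Z.eqb_spec (Z.of_nat n + 1) a); [lia|].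
      replace (Z.to_nat (Z.succ (Z.of_nat n) - a))
        with (S (Z.to_nat (Z.of_nat n - a))) by lia.
      cbn [stall_count].
      replace (Z.of_nat n + 1 - a)%Z
        with (Z.of_nat (Z.to_nat (Z.of_nat n - a)) + 1)%Z by lia.
      lia.
Qed.

Lemma stall_count_le_length l n :
  (Z.of_nat n <= level_mass l)%Z -> (stall_count l n <= length l)%nat.
Proof.
  revert n; induction l as [|i l IH]; intros n Hn.
  - rewrite stall_count_nil. unfold level_mass in Hn. simpl in Hn. lia.
  - cbn [level_mass map fold_right length] in *. fold (level_mass l) in Hn.
    pose proof (Al_nonneg lo sig G i) as Hi.
    destruct (Z.eq_dec (Al lo sig G i) 0) as [E|E].
    + rewrite stall_count_cons_empty by exact E. pose proof (IH n). lia.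
    + rewrite stall_count_cons by lia.
      destruct (Z.ltb_spec (Z.of_nat n) (Al lo sig G i)); [lia|].
      pose proof (IH (Z.to_nat (Z.of_nat n - Al lo sig G i))). lia.
Qed.

Lemma rsum_stalls l n :
  rsum (map (fun x => if returns (scan lo sig G x l) then 0 else 1) (draws (Z.of_nat n)))
  = INR (stall_count l n).
Proof.
  induction n as [|n IH]; [reflexivity|].
  rewrite draws_succ, map_app, rsum_app, IH. cbn [stall_count]. rewrite plus_INR.
  simpl. destruct (returns _); simpl; lra.
Qed.

End StallCount.

Lemma level_mass_desc lo N sig G : level_mass lo sig G (levels_desc N) = Atot lo N sig G.
Proof. unfold level_mass, levels_desc, Atot. rewrite map_rev, sumZ_rev. reflexivity. Qed.

Lemma Atot_nonneg lo N sig G : (0 <= Atot lo N sig G)%Z.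
Proof.
  unfold Atot. induction (seq 0 N) as [|i l IH]; simpl; [lia|].
  pose proof (Al_nonneg lo sig G i). lia.
Qed.

Section Masses.

Variables (b : nat) (lo : Z) (N : nat) (sig : nat -> list nat) (G : Z).

Let draws_A := draws (Atot lo N sig G).

Definition stall_mass : R :=
  rsum (map (fun x => if returns (scan_x lo N sig G x) then 0 else 1) draws_A).

Definition enter_mass : R :=
  rsum (map (fun x => match scan_x lo N sig G x with
                      | SRefine _ => 1 | _ => 0 end) draws_A).

Definition return_mass : R :=
  rsum (map (fun x => match scan_x lo N sig G x with
                      | SRet _ => 1
                      | SRefine i => refine_prob b lo sig G i
                      | SFall => 0 end) draws_A).

Lemma P_enter_eq : P_enter lo N sig G = enter_mass / IZR (Atot lo N sig G).
Proof. reflexivity. Qed.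

Lemma P_ret_eq : P_ret b lo N sig G = return_mass / IZR (Atot lo N sig G).
Proof. reflexivity. Qed.

Lemma length_draws_Atot : INR (length draws_A) = IZR (Atot lo N sig G).
Proof.
  unfold draws_A. rewrite <- (Z2Nat.id (Atot lo N sig G)) by apply Atot_nonneg.
  rewrite length_draws, <- INR_IZR_INZ. reflexivity.
Qed.

Lemma stall_mass_le : stall_mass <= INR N.
Proof.
  unfold stall_mass, draws_A.
  rewrite <- (Z2Nat.id (Atot lo N sig G)) by apply Atot_nonneg.
  unfold scan_x. rewrite rsum_stalls. apply le_INR.
  apply Nat.le_trans with (length (levels_desc N)).
  - apply stall_count_le_length.
    rewrite level_mass_desc, Z2Nat.id by apply Atot_nonneg. lia.
  - unfold levels_desc. rewrite length_rev, length_seq. reflexivity.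
Qed.

Lemma enter_mass_range : 0 <= enter_mass <= stall_mass.
Proof.
  split.
  - rewrite <- (Rmult_0_r (INR (length draws_A))), <- rsum_map_const.
    apply rsum_le. intro x. destruct (scan_x _ _ _ _ _); lra.
  - apply rsum_le. intro x. destruct (scan_x _ _ _ _ _); simpl; lra.
Qed.

Lemma return_mass_range :
  IZR (Atot lo N sig G) - stall_mass <= return_mass <= IZR (Atot lo N sig G).
Proof.
  rewrite <- length_draws_Atot, <- (Rmult_1_r (INR (length draws_A))), <- rsum_map_const.
  split.
  - enough (rsum (map (fun _ => 1) draws_A) <= return_mass + stall_mass) by lra.
    apply rsum_le_plus. intro x.
    destruct (scan_x _ _ _ _ _); simpl; try lra.
    pose proof (refine_prob_range b lo sig G i). lra.
  - apply rsum_le. intro x. destruct (scan_x _ _ _ _ _); try lra.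
    pose proof (refine_prob_range b lo sig G i). lra.
Qed.

End Masses.

Lemma is_series_geom_scal (p e : R) :
  0 < p <= 1 -> is_series (fun k => (1 - p) ^ k * e) (e / p).
Proof.
  intro Hp.
  assert (Hg : Rabs (1 - p) < 1) by (rewrite Rabs_pos_eq; lra).
  apply is_series_geom in Hg. replace (1 - (1 - p)) with p in Hg by ring.
  replace (e / p) with (/ p * e) by (field; lra).
  exact (is_series_scal_r e _ _ Hg).
Qed.

(* With at most c <= N stalling draws out of A, an entry mass E <= c and a
   return mass R >= A - c give E / R <= c / (A - c) <= N / (T - N). *)
Lemma stall_ratio_le (E Rt A c N T : R) :
  0 <= E <= c -> A - c <= Rt -> 0 <= c <= N -> N < T <= A ->
  E / Rt <= N / (T - N).
Proof.
  intros HE HR Hc HT.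
  apply Rmult_le_reg_r with (Rt * (T - N)); [nra|].
  replace (E / Rt * (Rt * (T - N))) with (E * (T - N)) by (field; lra).
  replace (N / (T - N) * (Rt * (T - N))) with (N * Rt) by (field; lra).
  nra.
Qed.

Lemma expected_refine_entries_le b lo N sig G (M : nat) :
  (N < 2 ^ M)%nat -> (2 ^ Z.of_nat M <= Atot lo N sig G)%Z ->
  ex_series (refine_entries_term b lo N sig G) /\
  expected_refine_entries b lo N sig G <= INR N / (2 ^ M - INR N).
Proof.
  intros HN HA.
  set (A := IZR (Atot lo N sig G)).
  assert (HNM : INR N < 2 ^ M)
    by (replace (2 ^ M) with (INR (2 ^ M)) by (rewrite pow_INR; f_equal; simpl; lra);
        apply lt_INR, HN).
  assert (HMA : 2 ^ M <= A) by (unfold A; rewrite <- IZR_pow2; apply IZR_le, HA).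
  pose proof (stall_mass_le lo N sig G) as Hs.
  pose proof (enter_mass_range lo N sig G) as HE.
  pose proof (return_mass_range b lo N sig G) as HR.
  fold A in HR.
  assert (Hp : 0 < return_mass b lo N sig G / A <= 1).
  { split; [apply Rdiv_lt_0_compat; lra|].
    apply Rmult_le_reg_r with A; [lra|]. field_simplify; lra. }
  assert (Hser : is_series (refine_entries_term b lo N sig G)
                   (enter_mass lo N sig G / return_mass b lo N sig G)).
  { replace (enter_mass lo N sig G / return_mass b lo N sig G)
      with (P_enter lo N sig G / P_ret b lo N sig G)
      by (rewrite P_enter_eq, P_ret_eq; fold A; field; lra).
    rewrite P_ret_eq. exact (is_series_geom_scal _ _ Hp). }
  split; [eexists; exact Hser|].
  unfold expected_refine_entries. rewrite (is_series_unique _ _ Hser).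
  apply stall_ratio_le with A (stall_mass lo N sig G); lra.
Qed.

Theorem mainTheorem7 (b : nat) (lo : Z) (N : nat) (sig : nat -> list nat) (G : Z)
    (K L : nat) :
  (2 <= b)%nat ->
  (forall i s, (i < N)%nat -> In s (sig i) -> (2 ^ (b - 1) <= s < 2 ^ b)%nat) ->
  (zcount N sig < 2 ^ b)%nat ->
  (1 <= zcount N sig)%nat ->
  (1 <= K)%nat -> (K <= L)%nat -> (N < 2 ^ K)%nat ->
  ((2 ^ Z.of_nat K <= Atot lo N sig G)%Z ->
     ex_series (refine_entries_term b lo N sig G) /\
     expected_refine_entries b lo N sig G <= INR N / (2 ^ K - INR N)) /\
  ((2 ^ Z.of_nat L <= Atot lo N sig G)%Z ->
     ex_series (refine_entries_term b lo N sig G) /\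
     expected_refine_entries b lo N sig G <= INR N / (2 ^ L - INR N)).
Proof.
  (* Only A(G) >= 2^M > N is used. *)
  intros _ _ _ _ _ HKL HNK.
  assert (HNL : (N < 2 ^ L)%nat)
    by (apply Nat.lt_le_trans with (2 ^ K)%nat; [exact HNK | apply Nat.pow_le_mono_r; lia]).
  split; apply expected_refine_entries_le; assumption.
Qed.
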